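(* Let $G$ be a unimodular locally compact group with Haar measure $m$, and let $\nu$ be a lower translation bounded measure on $G$. Let $B_l\subseteq G$ be a compact symmetric unit neighborhood and $C_l$ a positive number such that $\nu(B_lx)\ge C_l$ for all $x\in G$. Then for every nonempty compact $A\subseteq G$, \[ \nu(B_l A)\ge \frac{C_l}{m(B_l^2)} \cdot m(A). \]
   Context: A measure is a positive Borel measure; $\nu$ is lower translation bounded if there exist $C>0$ and a compact symmetric unit neighborhood $B$ with $\inf_{x\in G}\nu(Bx)\ge C$. $B_l^2=B_lB_l$, and $B_lA=\{ba:b\in B_l,a\in A\}$. *)

From HB Require Import structures.
From mathcomp Require Import all_boot all_order all_algebra.
From mathcomp Require Import all_classical all_reals all_analysis.
Set Implicit Arguments. Unset Strict Implicit. Unset Printing Implicit Defensive.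
Import Order.TTheory GRing.Theory Num.Theory.
Local Open Scope classical_set_scope.
Local Open Scope ring_scope.

(* The Borel sigma-algebra of a (pointed) topological space G is the one
   generated by the open sets; measures on G are measures on the type
   [borel G] = [g_sigma_algebraType (@open G)] (convertible to G). *)
Definition borel (G : ptopologicalType) := g_sigma_algebraType (@open G).

Definition lc_group (G : ptopologicalType)
  (mul : G -> G -> G) (inv : G -> G) (e : G) : Prop :=
  [/\ (forall x y z, mul x (mul y z) = mul (mul x y) z),
      (forall x, mul e x = x) /\ (forall x, mul x e = x),
      (forall x, mul (inv x) x = e) /\ (forall x, mul x (inv x) = e),
      continuous (fun p : G * G => mul p.1 p.2) /\ continuous inv &
      hausdorff_space G /\ locally_compact [set: G]].

Definition setmul (G : Type) (mul : G -> G -> G) (A B : set G) : set G :=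
  [set z | exists a b, [/\ A a, B b & z = mul a b]].

Definition ltrans (G : Type) (mul : G -> G -> G) (x : G) (A : set G) : set G :=
  (fun a => mul x a) @` A.
Definition rtrans (G : Type) (mul : G -> G -> G) (A : set G) (x : G) : set G :=
  (fun a => mul a x) @` A.

(* A (left) Haar measure: a nonzero left-invariant Radon measure, i.e. a
   Borel measure finite on compact sets, outer regular on Borel sets and
   inner regular (by compact sets) on open sets. *)
Definition haar_measure (R : realType) (G : ptopologicalType)
  (mul : G -> G -> G) (m : set (borel G) -> \bar R) : Prop :=
  [/\ (forall (x : G) (A : set (borel G)), measurable A ->
          m (ltrans mul x A) = m A),
      (forall K : set G, compact K -> (m K < +oo)%E),
      (forall A : set (borel G), measurable A ->
          m A = ereal_inf [set m U | U in [set U : set G | open U /\ A `<=` U]]),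
      (forall U : set G, open U ->
          m U = ereal_sup [set m K | K in [set K : set G | compact K /\ K `<=` U]]) &
      m [set: G] != 0%E].

(* Unimodularity (trivial modular function): the Haar measure m is also
   right invariant. *)
Definition unimodular (R : realType) (G : ptopologicalType)
  (mul : G -> G -> G) (m : set (borel G) -> \bar R) : Prop :=
  forall (x : G) (A : set (borel G)), measurable A -> m (rtrans mul A x) = m A.

From HB Require Import structures.
From mathcomp Require Import all_boot all_order all_algebra.
From mathcomp Require Import all_classical all_reals all_analysis.
From mathcomp Require Import finmap.
Import Order.TTheory GRing.Theory Num.Theory.
Set Implicit Arguments.
Unset Strict Implicit.
Unset Printing Implicit Defensive.

Local Open Scope classical_set_scope.
Local Open Scope ring_scope.

(* Choose a finite D in A, maximal among the sets whose right translates B x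
   (x in D) are pairwise disjoint.  These translates lie in BA and each has
   nu-mass at least C, so |D| C <= nu(BA); when nu(BA) is finite this bounds
   |D|, which is why a maximal D exists.  By maximality, for every y in A the
   translate B y meets some B x, so y lies in B^-1 B x = B^2 x, and right
   invariance of m gives m(A) <= |D| m(B^2). *)

Section Packing.
Variables (I : choiceType) (U : Type) (f : I -> set U) (A : set I).

Definition packing (D : {fset I}) := [set` D] `<=` A /\ trivIset [set` D] f.

Lemma packing_fsetU1 D y : packing D -> A y ->
  (forall x, x \in D -> f y `&` f x = set0) -> packing (y |` D)%fset.
Proof.
move=> [DA Dtriv] Ay yD; split=> [x /= /fset1UP[->//|/DA//]|x z].
move=> /= /fset1UP[->|xD] /fset1UP[->|zD] //.
- by rewrite yD // => /set0P; rewrite eqxx.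
- by rewrite setIC yD // => /set0P; rewrite eqxx.
- exact: Dtriv.
Qed.

Lemma exists_maximal_packing (N : nat) :
  (forall x, f x !=set0) -> (forall D, packing D -> (#|` D| <= N)%N) ->
  exists2 D, packing D & forall y, A y -> exists2 x, x \in D & f y `&` f x !=set0.
Proof.
move=> f_neq0 boundN.
pose P n := `[< exists2 D, packing D & #|` D| = n >].
have P0 : exists n, P n by exists 0%N; apply/asboolP; exists fset0 => //; split.
have PN n : P n -> (n <= N)%N by move=> /asboolP[D /boundN + <-].
case: (ex_maxnP P0 PN) => n /asboolP[D Dpack <-] Dmax.
exists D => // y Ay; apply: contrapT => yfree.
have yD x : x \in D -> f y `&` f x = set0.
  by move=> xD; apply/eqP/negPn/negP => /set0P ne; apply: yfree; exists x.
have yND : y \notin D by apply/negP => /yD; rewrite setIid => /eqP; apply/negP/set0P.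
have /Dmax : P #|` y |` D|%fset.
  by apply/asboolP; exists (y |` D)%fset => //; exact: packing_fsetU1.
by rewrite cardfsU1 yND ltnn.
Qed.

End Packing.

Section FiniteFamilies.
Context d (T : measurableType d) (R : realType) (mu : {measure set T -> \bar R}).
Variable I : choiceType.

Lemma sume_cst_fset (D : {fset I}) (c : R) : (\sum_(i <- D) c%:E)%E = (#|` D|%:R * c)%:E.
Proof.
rewrite sumEFin card_fset_sum1 natr_sum mulr_suml.
congr _%:E; apply: eq_bigr => i _.
by rewrite mulr1n mul1r.
Qed.

Lemma measure_disjoint_fset_ge (D : {fset I}) (F : I -> set T) (c : R) :
  (forall i, measurable (F i)) -> (forall i, (c%:E <= mu (F i))%E) ->
  trivIset [set` D] F -> ((#|` D|%:R * c)%:E <= mu (\bigcup_(i in [set` D]) F i))%E.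
Proof.
move=> Fm Fc Ftriv; rewrite bigcup_fset measure_fbigsetU // -sume_cst_fset.
by apply: lee_sum => i _; apply: Fc.
Qed.

Lemma measure_fset_cover_le (D : {fset I}) (A : set T) (F : I -> set T) (b : R) :
  measurable A -> (forall i, measurable (F i)) -> (forall i, (mu (F i) <= b%:E)%E) ->
  A `<=` \bigcup_(i in [set` D]) F i -> (mu A <= (#|` D|%:R * b)%:E)%E.
Proof.
move=> Am Fm Fb AF; rewrite -sume_cst_fset.
apply: le_trans (content_sub_fsum mu (finite_fset D) (fun i _ => Fm i) Am AF) _.
by rewrite -fsbig_seq ?fset_uniq //; apply: lee_sum => i _; apply: Fb.
Qed.

Variables (A : set I) (F : I -> set T) (S : set T) (c : R).
Hypotheses (Fm : forall i, measurable (F i)) (Fc : forall i, (c%:E <= mu (F i))%E).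
Hypotheses (Sm : measurable S) (FS : forall i, A i -> F i `<=` S).

Lemma packing_measure_le D : packing F A D -> ((#|` D|%:R * c)%:E <= mu S)%E.
Proof.
move=> [DA Dtriv]; apply: le_trans (measure_disjoint_fset_ge Fm Fc Dtriv) _.
have Um : measurable (\bigcup_(i in [set` D]) F i).
  by apply: fin_bigcup_measurable => //; exact: finite_fset.
by apply: le_measure (mem_set Um) (mem_set Sm) _ => x [i /DA/FS]; apply.
Qed.

Lemma packing_card_le D : 0 < c -> mu S != +oo%E ->
  packing F A D -> (#|` D| <= Num.truncn (fine (mu S) / c))%N.
Proof.
move=> c_gt0 Sfin Dpack.
have le_Dc : #|` D|%:R * c <= fine (mu S).
  by rewrite -lee_fin fineK ?ge0_fin_numE ?ltey //; exact: packing_measure_le.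
rewrite truncn_ge_nat; last by rewrite divr_ge0 ?fine_ge0 // ltW.
by rewrite ler_pdivlMr.
Qed.

End FiniteFamilies.

Lemma count_ratio_le (R : realType) (a N : \bar R) (b c n : R) :
  0 <= b -> 0 <= c -> 0 <= n -> (a <= (n * b)%:E)%E -> ((n * c)%:E <= N)%E ->
  ((c / b)%:E * a <= N)%E.
Proof.
move=> b_ge0 c_ge0 n_ge0 le_a le_N.
apply: le_trans (lee_wpmul2l _ le_a) _; first by rewrite lee_fin divr_ge0.
rewrite -EFinM; apply: le_trans le_N; rewrite lee_fin.
have [->|b_neq0] := eqVneq b 0; first by rewrite invr0 mulr0 mul0r mulr_ge0.
by rewrite mulrCA divfK.
Qed.

Section Translates.
Variables (G : Type) (mul : G -> G -> G) (inv : G -> G) (e : G).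
Hypotheses (mulA : forall x y z, mul x (mul y z) = mul (mul x y) z)
  (mul1g : forall x, mul e x = x) (mulVg : forall x, mul (inv x) x = e).

Lemma rtrans_setmul1 (X : set G) x : rtrans mul X x = setmul mul X [set x].
Proof.
apply/seteqP; split=> z; first by case=> a Xa <-; exists a, x.
by case=> a [_ [Xa -> ->]]; exists a.
Qed.

Lemma rtrans_sub_setmul (X Y : set G) :
  forall y, Y y -> rtrans mul X y `<=` setmul mul X Y.
Proof. by move=> y Yy _ [x Xx <-]; exists x, y. Qed.

Lemma mem_rtrans_self (B : set G) x : B e -> rtrans mul B x x.
Proof. by move=> Be; exists e. Qed.

Lemma mem_rtrans_setmul_of_meet (B : set G) x y : inv @` B = B ->
  rtrans mul B y `&` rtrans mul B x !=set0 -> rtrans mul (setmul mul B B) x y.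
Proof.
move=> symB [_ [[b Bb <-] [b' Bb' bx]]]; exists (mul (inv b) b').
  by exists (inv b), b'; split=> //; rewrite -symB; exists b.
by rewrite -mulA bx mulA mulVg mul1g.
Qed.

End Translates.

Section CompactProducts.
Variables (G : ptopologicalType) (mul : G -> G -> G).
Hypothesis mul_cont : continuous (fun p : G * G => mul p.1 p.2).

Lemma setmul_image (X Y : set G) :
  setmul mul X Y = (fun p : G * G => mul p.1 p.2) @` (X `*` Y).
Proof.
apply/seteqP; split=> z; first by case=> a [b [Xa Yb ->]]; exists (a, b).
by case=> -[a b] [/= Xa Yb] <-; exists a, b.
Qed.

Lemma compact_setmul (X Y : set G) :
  compact X -> compact Y -> compact (setmul mul X Y).
Proof.
move=> cX cY; rewrite setmul_image; apply: continuous_compact.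
  exact: continuous_subspaceT.
exact: compact_setX.
Qed.

Lemma compact_rtrans (X : set G) x : compact X -> compact (rtrans mul X x).
Proof.
by move=> cX; rewrite rtrans_setmul1; apply: compact_setmul => //; exact: compact_set1.
Qed.

End CompactProducts.

Lemma compact_borel (G : ptopologicalType) (X : set G) :
  hausdorff_space G -> compact X -> measurable (X : set (borel G)).
Proof.
move=> hG /(compact_closed hG) cX; rewrite -[X]setCK; apply: measurableC.
by apply: sub_sigma_algebra; exact: closed_openC.
Qed.

Theorem lemma2p5 (R : realType) (G : ptopologicalType)
  (mul : G -> G -> G) (inv : G -> G) (e : G)
  (m nu : {measure set (borel G) -> \bar R})
  (B : set G) (C : R) :
  lc_group mul inv e ->
  haar_measure mul m -> unimodular mul m ->
  compact B -> inv @` B = B -> nbhs e B ->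
  0 < C -> (forall x : G, (C%:E <= nu (rtrans mul B x))%E) ->
  forall A : set G, compact A -> A !=set0 ->
  ((C / fine (m (setmul mul B B)))%:E * m A <= nu (setmul mul B A))%E.
Proof.
move=> [mulA [mul1g _] [mulVg _] [mul_cont _] [hG _]] [_ m_cpt _ _ _] m_rinv.
move=> cB symB /nbhs_singleton Be C_gt0 nuB A cA _.
have trans_borel X x : compact X -> measurable (rtrans mul X x : set (borel G)).
  by move=> cX; apply: compact_borel hG _; exact: compact_rtrans.
have cBB := compact_setmul mul_cont cB cB.
set S := setmul mul B A.
have Sm : measurable (S : set (borel G)).
  exact: compact_borel hG (compact_setmul mul_cont cB cA).
have BS := @rtrans_sub_setmul _ mul B A.
have [->|S_fin] := eqVneq (nu S) +oo%E; first exact: leey.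
have [D Dpack Dmax] := exists_maximal_packing
  (fun x => ex_intro _ x (mem_rtrans_self mul1g x Be))
  (fun D => packing_card_le (trans_borel B ^~ cB) nuB Sm BS C_gt0 S_fin).
have cover : A `<=` \bigcup_(x in [set` D]) rtrans mul (setmul mul B B) x.
  by move=> y /Dmax[x xD /(mem_rtrans_setmul_of_meet mulA mul1g mulVg symB)]; exists x.
set b := fine (m (setmul mul B B)).
have mBBx x : (m (rtrans mul (setmul mul B B) x) <= b%:E)%E.
  by rewrite m_rinv ?fineK ?ge0_fin_numE ?m_cpt //; exact: compact_borel.
have mA := measure_fset_cover_le (compact_borel hG cA) (trans_borel _ ^~ cBB) mBBx cover.
have nuD := packing_measure_le (trans_borel B ^~ cB) nuB Sm BS Dpack.
exact: count_ratio_le (fine_ge0 (measure_ge0 _ _)) (ltW C_gt0) (ler0n _ _) mA nuD.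
Qed.
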